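(* For every $g\in G(\Gamma)$ and every $d\ge1$, the $d$-tail of $g$ contains at most $d\kappa$ syllables, where $\kappa$ is the maximal number of pairwise adjacent vertices of $\Gamma$.
   Context: $G(\Gamma)$ is the graph product of groups $\{G_v\}_{v\in\Gamma}$ over a finite simplicial graph $\Gamma$. Reduced words are words $(g_1,\dots,g_n)$, $g_i\in G_{v_i}$, that cannot be shortened by swapping consecutive syllables from adjacent vertex groups, merging consecutive syllables from the same vertex group, or deleting identity syllables; reduced words for the same element differ by such swaps. The $d$-tail of $g$ is the set of syllables of $g$ which occur among the last $d$ syllables of some reduced word representing $g$. *)

From Stdlib Require Import Relations List.
From HB Require Import structures.
From mathcomp Require Import all_boot.
Set Implicit Arguments. Unset Strict Implicit. Unset Printing Implicit Defensive.

Record grp := Grp {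
  gcar :> Type;
  gmul : gcar -> gcar -> gcar;
  gone : gcar;
  ginv : gcar -> gcar;
  gmulA : forall x y z, gmul x (gmul y z) = gmul (gmul x y) z;
  gmul1l : forall x, gmul gone x = x;
  gmul1r : forall x, gmul x gone = x;
  gmulVl : forall x, gmul (ginv x) x = gone;
  gmulVr : forall x, gmul x (ginv x) = gone }.

Section GraphProduct.
Variables (V : finType) (adj : rel V) (G : V -> grp).

Definition syll := {v : V & G v}.

Inductive wstep : seq syll -> seq syll -> Prop :=
| wswap (a b : seq syll) (x y : syll) :
    adj (projT1 x) (projT1 y) -> wstep (a ++ x :: y :: b) (a ++ y :: x :: b)
| wmerge (a b : seq syll) (v : V) (g h : G v) :
    wstep (a ++ existT _ v g :: existT _ v h :: b)
          (a ++ existT _ v (gmul g h) :: b)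
| wdelete (a b : seq syll) (v : V) :
    wstep (a ++ existT _ v (gone (G v)) :: b) (a ++ b).

(* Two words represent the same element of G(Gamma). *)
Definition wequiv : relation (seq syll) := clos_refl_sym_trans _ wstep.

Definition reduced (w : seq syll) : Prop :=
  forall w', clos_refl_trans _ wstep w w' -> size w <= size w'.

Definition in_tail (d : nat) (w : seq syll) (s : syll) : Prop :=
  exists u, reduced u /\ wequiv u w /\ List.In s (drop (size u - d) u).

End GraphProduct.

Definition is_clique (V : finType) (adj : rel V) (S : {set V}) : bool :=
  [forall x in S, forall y in S, (x != y) ==> adj x y].

Definition clique_number (V : finType) (adj : rel V) : nat :=
  \max_(S : {set V} | is_clique adj S) #|S|.

(* Two reduced words for the same element differ only by swaps of adjacent
   syllables from adjacent vertex groups (normal form theorem, proved by letting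
   the vertex groups act on swap-classes of reduced words).  So every syllable
   of the d-tail is a position of one fixed reduced word u, moved into the last
   d places by swaps.  Give each position i of u the height
   1 + max {height j | j after i, j not commuting with i};
   it is invariant under swaps and at most d in the last d places, and two
   positions of the same height commute, so their vertices form a clique.  Hence
   there are at most kappa positions of each height, and at most d kappa of
   height between 1 and d. *)
From Stdlib Require Import Relations List Classical ClassicalEpsilon Eqdep_dec.
From HB Require Import structures.
From mathcomp Require Import all_boot zify.
Set Implicit Arguments. Unset Strict Implicit. Unset Printing Implicit Defensive.

Lemma InP (T : eqType) (x : T) (s : seq T) : reflect (List.In x s) (x \in s).
Proof.
elim: s => [|y s IH]; first by constructor.
rewrite inE; apply: (iffP orP) => [[/eqP ->|/IH]|[->|/IH ->]] /=; by [left|right|rewrite eqxx|rewrite orbT].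
Qed.

Lemma map_eq_cat_cons2 (S T : Type) (f : S -> T) L c a b d :
  map f L = c ++ a :: b :: d ->
  exists c1 i j d1, [/\ L = c1 ++ i :: j :: d1, map f c1 = c, f i = a, f j = b & map f d1 = d].
Proof.
elim: c L => [|e c IH] [|x L] //=.
  case: L => [|y L] [] // <- <- <-.
  by exists [::], x, y, L.
case=> <- /IH [c1 [i [j [d1 [-> <- <- <- <-]]]]].
by exists (x :: c1), i, j, d1.
Qed.

Lemma cat_cons2_eq_cat_cons (T : Type) (c d z1 z2 : seq T) (a b x : T) :
  c ++ a :: b :: d = z1 ++ x :: z2 ->
  [\/ exists c', z1 = c ++ a :: b :: c' /\ d = c' ++ x :: z2,
      [/\ z1 = rcons c a, x = b & z2 = d],
      [/\ z1 = c, x = a & z2 = b :: d]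
    | exists c', c = z1 ++ x :: c' /\ z2 = c' ++ a :: b :: d].
Proof.
elim: c z1 => [|e c IH] z1 /=.
  case: z1 => [|y [|y' z1]] /= [] => [-> ->|-> -> ->|-> -> ->].
  - by constructor 3.
  - by constructor 2.
  - by constructor 1; exists z1.
case: z1 => [|y z1] /= [] => [<- <-|-> /IH].
  by constructor 4; exists c.
case=> [[c' [-> ->]]|[-> -> ->]|[-> -> ->]|[c' [-> ->]]].
- by constructor 1; exists c'.
- by constructor 2.
- by constructor 3.
- by constructor 4; exists c'.
Qed.

Section Swaps.
Variables (T : Type) (r : rel T).

Inductive swap_step : seq T -> seq T -> Prop :=
  SwapStep a b x y of r x y : swap_step (a ++ x :: y :: b) (a ++ y :: x :: b).

Definition swap_equiv := clos_refl_trans _ swap_step.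

Lemma swap_equiv_refl u : swap_equiv u u.
Proof. exact: rt_refl. Qed.

Lemma swap_equiv_trans u v w : swap_equiv u v -> swap_equiv v w -> swap_equiv u w.
Proof. exact: rt_trans. Qed.

Lemma swap_equiv_sym u v : symmetric r -> swap_equiv u v -> swap_equiv v u.
Proof.
move=> r_sym; elim=> [_ _ [a b x y rxy]|x|x y z _ H1 _ H2].
- by apply: rt_step; apply: SwapStep; rewrite r_sym.
- exact: rt_refl.
- exact: rt_trans H2 H1.
Qed.

Lemma swap_equiv_head x y b : r x y -> swap_equiv (x :: y :: b) (y :: x :: b).
Proof. by move=> rxy; apply: rt_step; apply: (SwapStep [::] b rxy). Qed.

Lemma swap_equiv_catl p u u' : swap_equiv u u' -> swap_equiv (p ++ u) (p ++ u').
Proof.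
elim=> [_ _ [a b x y rxy]|x|x y z _ H1 _ H2]; [|exact: rt_refl|exact: rt_trans H1 H2].
by apply: rt_step; rewrite !catA; apply: SwapStep.
Qed.

Lemma swap_equiv_cons x u u' : swap_equiv u u' -> swap_equiv (x :: u) (x :: u').
Proof. exact: (swap_equiv_catl [:: x]). Qed.

Lemma swap_equiv_size u u' : swap_equiv u u' -> size u = size u'.
Proof.
elim=> [_ _ [a b x y _]|x|x y z _ H1 _ H2] //; last by rewrite H1.
by rewrite !size_cat.
Qed.

Lemma swap_equiv_In u u' s : swap_equiv u u' -> List.In s u -> List.In s u'.
Proof.
elim=> [_ _ [a b x y _]|x|x y z _ H1 _ H2] //; last by move=> /H1 /H2.
rewrite !in_app_iff /=; tauto.
Qed.

Lemma swap_equiv_move_front x z1 z2 : symmetric r -> all (r x) z1 ->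
  swap_equiv (z1 ++ x :: z2) (x :: z1 ++ z2).
Proof.
move=> r_sym; elim: z1 => [|y z1 IH] /=; first by move=> _; exact: swap_equiv_refl.
move=> /andP [rxy /IH H]; apply: swap_equiv_trans (swap_equiv_cons y H) _.
by apply: swap_equiv_head; rewrite r_sym.
Qed.

Lemma swap_equiv_consE x u z : swap_equiv (x :: u) z ->
  exists z1 z2, [/\ z = z1 ++ x :: z2, all (r x) z1 & swap_equiv u (z1 ++ z2)].
Proof.
move=> /clos_rt_rtn1_iff; elim=> [|_ _ [c d a b rab] _ [z1 [z2 [E rxz1 H]]]].
  by exists [::], u; split => //; exact: swap_equiv_refl.
case: (cat_cons2_eq_cat_cons E) => [[c' [E1 E2]]|[E1 E2 E3]|[E1 E2 E3]|[c' [E1 E2]]].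
- exists (c ++ b :: a :: c'), z2; split; first by rewrite E2 -catA.
  + by move: rxz1; rewrite E1 !all_cat /= => /andP [-> /and3P [-> -> ->]].
  + apply: swap_equiv_trans H _; rewrite E1 -!catA /=.
    by apply: rt_step; apply: SwapStep.
- subst; exists c, (a :: d); split => //.
  + by move: rxz1; rewrite all_rcons => /andP [].
  + by rewrite cat_rcons in H.
- subst; exists (rcons c b), d; split; first by rewrite cat_rcons.
  + by rewrite all_rcons rab.
  + by rewrite cat_rcons.
- subst; exists z1, (c' ++ b :: a :: d); split; first by rewrite -catA.
  + by [].
  + apply: swap_equiv_trans H _; rewrite !catA.
    by apply: rt_step; apply: SwapStep.
Qed.

End Swaps.

Lemma swap_equiv_map (S T : Type) (r : rel T) (f : S -> T) L u :
  swap_equiv r (map f L) u ->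
  exists2 L', u = map f L' & swap_equiv (relpre f r) L L'.
Proof.
move=> /clos_rt_rtn1_iff; elim=> [|_ _ [c d a b rab] _ [L' E H]].
  by exists L => //; exact: rt_refl.
have [c1 [i [j [d1 [EL <- Ei Ej <-]]]]] := map_eq_cat_cons2 (esym E).
exists (c1 ++ j :: i :: d1); first by rewrite map_cat /= Ei Ej.
apply: rt_trans H (rt_step _ _ _ _ _); rewrite EL; apply: SwapStep.
by rewrite /= Ei Ej.
Qed.

Lemma swap_equiv_perm (T : eqType) (r : rel T) L L' :
  swap_equiv r L L' -> perm_eq L L'.
Proof.
elim=> [_ _ [a b x y _]|x|x y z _ H1 _ H2] //; last exact: perm_trans H1 H2.
by rewrite perm_cat2l (perm_catCA [:: x] [:: y] b).
Qed.

Section Height.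
Variables (T : eqType) (comm : rel T).
Hypothesis comm_sym : symmetric comm.

Fixpoint height (L : seq T) (x : T) : nat :=
  if L is z :: L' then
    if x == z then (\max_(y <- L' | ~~ comm z y) height L' y).+1 else height L' x
  else 0.

Lemma height_cons z L x : height (z :: L) x =
  if x == z then (\max_(y <- L | ~~ comm z y) height L y).+1 else height L x.
Proof. by []. Qed.

Arguments height : simpl never.

Lemma height_swap_head x y b t : comm x y -> uniq (x :: y :: b) ->
  height (x :: y :: b) t = height (y :: x :: b) t.
Proof.
move=> cxy /= /and3P []; rewrite inE negb_or => /andP [nxy xb] yb _.
have max_cons z (c s : seq T) (P : pred T) : z \notin c -> {subset s <= c} ->
    \max_(y0 <- s | P y0) height (z :: c) y0 = \max_(y0 <- s | P y0) height c y0.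
  move=> zc sub; rewrite big_seq_cond [RHS]big_seq_cond; apply: eq_bigr => y0 /andP [/sub y0c _].
  rewrite height_cons.
  by case: eqVneq y0c => // ->; rewrite (negbTE zc).
have nyx : y != x by rewrite eq_sym.
case: (eqVneq t x) => [->|tx].
  rewrite !height_cons eqxx (negbTE nxy) big_cons cxy /=.
  by rewrite (max_cons _ _ _ _ yb (fun _ => id)).
case: (eqVneq t y) => [->|ty]; last by rewrite !height_cons (negbTE tx) (negbTE ty).
rewrite !height_cons eqxx (negbTE nyx) big_cons comm_sym cxy /=.
by rewrite (max_cons _ _ _ _ xb (fun _ => id)).
Qed.

Lemma height_swap_step L L' t : swap_step comm L L' -> uniq L -> height L t = height L' t.
Proof.
case=> a b x y cxy; elim: a t => [|z a IH] t; first exact: height_swap_head.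
move=> /= /andP [_ uniq_L]; rewrite !height_cons; case: (t == z); last exact: IH.
have perm_ab : perm_eq (a ++ [:: x, y & b]) (a ++ [:: y, x & b]).
  by rewrite perm_cat2l (perm_catCA [:: x] [:: y] b).
congr S; rewrite (perm_big _ perm_ab).
by apply: eq_bigr => y0 _; apply: IH.
Qed.

Lemma height_swap_equiv L L' t : swap_equiv comm L L' -> uniq L ->
  height L t = height L' t.
Proof.
move=> H; elim: H t => [? ? /height_swap_step //|//|x y z Hxy IH1 _ IH2 t ux].
by rewrite IH1 // IH2 // -(perm_uniq (swap_equiv_perm Hxy)).
Qed.

Lemma height_leq_size_index L x : height L x <= size L - index x L.
Proof.
elim: L x => [|z L IH] x //=; rewrite height_cons eq_sym; case: (z == x).
  rewrite subn0 ltnS; apply/bigmax_leqP_seq => y _ _.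
  exact: leq_trans (IH y) (leq_subr _ _).
by rewrite subSS.
Qed.

Lemma height_gt0 L x : x \in L -> 0 < height L x.
Proof.
by elim: L => [|z L IH] //; rewrite inE height_cons; case: (x == z) => //= /IH.
Qed.

Lemma index_drop_leq (L : seq T) x k : uniq L -> x \in drop k L -> k <= index x L.
Proof.
elim: L k => [|z L IH] [|k] //= /andP [zL uL] xd.
have xL := mem_drop xd.
by case: eqVneq xL zL => [->|_ _ _]; [move=> -> | rewrite ltnS; apply: IH].
Qed.

Lemma height_drop L x d : uniq L -> x \in drop (size L - d) L -> height L x <= d.
Proof.
move=> uL xd; apply: leq_trans (height_leq_size_index L x) _.
by rewrite leq_subLR addnC -leq_subLR; apply: index_drop_leq.
Qed.

Lemma eq_height_comm L x y : uniq L -> x \in L -> y \in L -> x != y ->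
  height L x = height L y -> comm x y.
Proof.
move=> uL xL yL nxy; apply: contra_eqT => ncxy.
elim: L uL xL yL => [|z L IH] //= /andP [zL uL]; rewrite !inE !height_cons.
have below w : w \in L -> ~~ comm z w ->
    height L w < (\max_(y0 <- L | ~~ comm z y0) height L y0).+1.
  by move=> wL nzw; rewrite ltnS; apply: leq_bigmax_seq.
case: (eqVneq x z) => [Exz _|xz /= xL]; case: (eqVneq y z) => [Eyz _|yz /= yL].
- by rewrite Exz Eyz eqxx in nxy.
- by rewrite gtn_eqF // below // -Exz.
- by rewrite ltn_eqF // below // -Eyz comm_sym.
- exact: IH.
Qed.

End Height.

Section NormalForm.
Variables (V : finType) (adj : rel V) (G : V -> grp).
Hypotheses (adj_sym : symmetric adj) (adj_irr : irreflexive adj).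

Local Notation syl := (syll G).

Definition syl_adj : rel syl := fun x y => adj (tag x) (tag y).

Local Notation sweq := (swap_equiv syl_adj).

Lemma syl_adj_sym : symmetric syl_adj.
Proof. by move=> x y; apply: adj_sym. Qed.

Lemma sweq_sym u u' : sweq u u' -> sweq u' u.
Proof. exact: swap_equiv_sym syl_adj_sym. Qed.

Definition mksyl (v : V) (g : G v) : syl := existT _ v g.
Arguments mksyl : clear implicits.

Lemma mksyl_inj v g h : mksyl v g = mksyl v h -> g = h.
Proof. by apply: inj_pair2_eq_dec => x y; exact: (decP (x =P y)). Qed.

Lemma mksyl_vertex_inj v w g h : mksyl v g = mksyl w h -> v = w.
Proof. by move=> E; exact: (congr1 tag E). Qed.

Lemma sweq_cons_same_vertex v k k' r r' :
  sweq (mksyl v k :: r) (mksyl v k' :: r') -> k = k' /\ sweq r r'.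
Proof.
move=> /(@swap_equiv_consE _ syl_adj) [[|y z1] [z2 [/= E adj_z1 H]]].
  by case: E => /mksyl_inj <- ->.
by case: E adj_z1 => <- _ /= /andP []; rewrite /syl_adj /= adj_irr.
Qed.

Definition has_head v u := exists kr : G v * seq syl, sweq u (mksyl v kr.1 :: kr.2).

Lemma has_headI v u k r : sweq u (mksyl v k :: r) -> has_head v u.
Proof. by move=> H; exists (k, r). Qed.

Lemma has_headE v u : has_head v u -> exists k r, sweq u (mksyl v k :: r).
Proof. by case=> [[k r] H]; exists k, r. Qed.

Lemma has_head_cons_adj v w m r : adj v w -> has_head v (mksyl w m :: r) -> has_head v r.
Proof.
move=> adj_vw [[k r'] /= /sweq_sym /(@swap_equiv_consE _ syl_adj)].
case=> [[|y z1] [z2 [/= E adj_z1 _]]].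
  by case: E => Ewv; rewrite Ewv adj_irr in adj_vw.
case: E adj_z1 => _ -> /= /andP [_ adj_z1].
exact: has_headI (swap_equiv_move_front _ syl_adj_sym adj_z1).
Qed.

Definition push (v : V) (g : G v) (r : seq syl) : seq syl :=
  if excluded_middle_informative (g = gone (G v)) then r else mksyl v g :: r.
Arguments push : clear implicits.

Lemma push_one v r : push v (gone (G v)) r = r.
Proof. by rewrite /push; case: excluded_middle_informative. Qed.

Lemma push_nontriv v g r : g <> gone (G v) -> push v g r = mksyl v g :: r.
Proof. by rewrite /push; case: excluded_middle_informative. Qed.

Lemma push_sweq v g r r' : sweq r r' -> sweq (push v g r) (push v g r').
Proof.
move=> H; rewrite /push.
by destruct (excluded_middle_informative _) => //; apply: swap_equiv_cons.
Qed.

(* Multiplication of a word by a syllable on the left: merge with a head from the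
   same vertex group (if a swap exposes one), then drop the result if trivial.
   The head is chosen by description, so act is only meaningful up to sweq. *)
Definition act (s : syl) (u : seq syl) : seq syl :=
  let: existT v g := s in
  match excluded_middle_informative (has_head v u) with
  | left H => let kr := proj1_sig (constructive_indefinite_description _ H) in
              push v (gmul g kr.1) kr.2
  | right _ => push v g u
  end.
Arguments act : simpl never.

Lemma act_head v g u k r : sweq u (mksyl v k :: r) ->
  sweq (act (mksyl v g) u) (push v (gmul g k) r).
Proof.
move=> Hu; rewrite /act /mksyl /=.
case: excluded_middle_informative => [H|]; last by case; exists (k, r).
case: (constructive_indefinite_description _ H) => [[k' r'] /= Hk] /=.
have [-> Hr] := sweq_cons_same_vertex (swap_equiv_trans (sweq_sym Hk) Hu).
exact: push_sweq.
Qed.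

Lemma act_no_head v g u : ~ has_head v u -> act (mksyl v g) u = push v g u.
Proof. by move=> Hn; rewrite /act /mksyl /=; case: excluded_middle_informative. Qed.

Lemma act_sweq s u u' : sweq u u' -> sweq (act s u) (act s u').
Proof.
case: s => v g Hu; rewrite -/(mksyl v g).
case: (classic (has_head v u)) => [/has_headE [k [r H]]|Hn].
  apply: swap_equiv_trans (act_head g H) (sweq_sym _); apply: act_head.
  exact: swap_equiv_trans (sweq_sym Hu) H.
have Hn' : ~ has_head v u'.
  by case=> [[k r] H]; apply: Hn; exists (k, r); exact: swap_equiv_trans Hu H.
by rewrite !act_no_head //; apply: push_sweq.
Qed.

Definition swap_reduced u :=
  (forall v, ~ List.In (mksyl v (gone (G v))) u) /\
  (forall p q v k k', ~ sweq u (p ++ mksyl v k :: mksyl v k' :: q)).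

Lemma swap_reduced_sweq u u' : sweq u u' -> swap_reduced u -> swap_reduced u'.
Proof.
move=> H [no_one no_pair]; split.
  by move=> v /(swap_equiv_In (sweq_sym H)) /no_one.
by move=> p q v k k' /(swap_equiv_trans H) /no_pair.
Qed.

Lemma swap_reduced_behead u x r : swap_reduced u -> sweq u (x :: r) -> swap_reduced r.
Proof.
move=> [no_one no_pair] H; split.
  by move=> v Hin; apply: (no_one v); apply: (swap_equiv_In (sweq_sym H)); right.
move=> p q v k k' Hr; apply: (no_pair (x :: p) q v k k').
exact: swap_equiv_trans H (swap_equiv_cons _ Hr).
Qed.

Lemma sweq_cons_pairE v m r p q w a b :
  sweq (mksyl v m :: r) (p ++ mksyl w a :: mksyl w b :: q) ->
  (exists p' q' w' a' b', sweq r (p' ++ mksyl w' a' :: mksyl w' b' :: q')) \/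
  (exists b' r', sweq r (mksyl v b' :: r')).
Proof.
move=> /(@swap_equiv_consE _ syl_adj) [z1 [z2 [E adj_z1 H]]].
case: (cat_cons2_eq_cat_cons E) => [[c' [E1 E2]]|[E1 E2 E3]|[E1 E2 E3]|[c' [E1 E2]]].
- left; exists p, (c' ++ z2), w, a, b.
  by rewrite E1 -catA in H.
- have Evw := mksyl_vertex_inj E2; subst w.
  by move: adj_z1; rewrite E1 all_rcons /syl_adj /= adj_irr.
- have Evw := mksyl_vertex_inj E2; subst w z1 z2.
  right; exists b, (p ++ q); apply: swap_equiv_trans H _.
  exact: (swap_equiv_move_front q syl_adj_sym (adj_z1 : all (syl_adj (mksyl v b)) p)).
- left; exists (z1 ++ c'), q, w, a, b.
  by rewrite E2 catA in H.
Qed.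

Lemma swap_reduced_cons v g r : g <> gone (G v) -> swap_reduced r ->
  ~ has_head v r -> swap_reduced (mksyl v g :: r).
Proof.
move=> g_nontriv [no_one no_pair] no_head; split.
  move=> w /= [E|]; last exact: no_one.
  have Evw := mksyl_vertex_inj E; subst w.
  exact: g_nontriv (mksyl_inj E).
move=> p q w a b /sweq_cons_pairE [[p' [q' [w' [a' [b' H]]]]]|[b' [r' H]]].
  exact: no_pair H.
exact: no_head (has_headI H).
Qed.

Lemma swap_reduced_nil : swap_reduced [::].
Proof.
split=> [v []|p q v k k' /swap_equiv_size].
by rewrite size_cat /= addnS.
Qed.

Lemma swap_reduced_push_head v g u k r : swap_reduced u -> sweq u (mksyl v k :: r) ->
  swap_reduced (push v g r).
Proof.
move=> red_u H; have red_r := swap_reduced_behead red_u H.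
case: (classic (g = gone (G v))) => [->|g_nontriv]; first by rewrite push_one.
rewrite push_nontriv //; apply: swap_reduced_cons => // -[[b r'] Hr].
case: red_u => _ no_pair; apply: (no_pair [::] r' v k b).
exact: swap_equiv_trans H (swap_equiv_cons _ Hr).
Qed.

Lemma swap_reduced_act s u : swap_reduced u -> swap_reduced (act s u).
Proof.
case: s => v g red_u; rewrite -/(mksyl v g).
case: (classic (has_head v u)) => [/has_headE [k [r H]]|no_head].
  apply: swap_reduced_sweq (sweq_sym (act_head g H)) _.
  exact: swap_reduced_push_head H.
rewrite act_no_head //; case: (classic (g = gone (G v))) => [->|g_nontriv].
  by rewrite push_one.
by rewrite push_nontriv //; apply: swap_reduced_cons.
Qed.

Lemma act_one v u : swap_reduced u -> sweq (act (mksyl v (gone (G v))) u) u.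
Proof.
move=> [no_one _]; case: (classic (has_head v u)) => [/has_headE [k [r H]]|no_head]; last first.
  by rewrite act_no_head // push_one; exact: swap_equiv_refl.
apply: swap_equiv_trans (act_head _ H) _; rewrite gmul1l push_nontriv.
  exact: sweq_sym.
by move=> Ek; apply: (no_one v); apply: (swap_equiv_In (sweq_sym H)); left; rewrite Ek.
Qed.

Lemma act_mul v g h u : swap_reduced u ->
  sweq (act (mksyl v g) (act (mksyl v h) u)) (act (mksyl v (gmul g h)) u).
Proof.
move=> [_ no_pair]; case: (classic (has_head v u)) => [/has_headE [k [r H]]|no_head].
  apply: swap_equiv_trans (act_sweq _ (act_head h H)) _.
  apply: swap_equiv_trans _ (sweq_sym (act_head _ H)).
  case: (classic (gmul h k = gone (G v))) => [E|hk_nontriv].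
    rewrite E push_one -gmulA E gmul1r act_no_head; first exact: swap_equiv_refl.
    case=> [[k' r'] Hr]; apply: (no_pair [::] r' v k k').
    exact: swap_equiv_trans H (swap_equiv_cons _ Hr).
  rewrite push_nontriv // -gmulA; exact: act_head _ (swap_equiv_refl _ _).
rewrite (act_no_head h no_head) (act_no_head _ no_head).
case: (classic (h = gone (G v))) => [->|h_nontriv].
  by rewrite push_one gmul1r act_no_head //; exact: swap_equiv_refl.
by rewrite push_nontriv //; exact: act_head _ (swap_equiv_refl _ _).
Qed.

Lemma push_cons_adj v g x r : adj v (tag x) -> sweq (push v g (x :: r)) (x :: push v g r).
Proof.
move=> adj_vx; case: (classic (g = gone (G v))) => [->|g_nontriv].
  by rewrite !push_one; exact: swap_equiv_refl.
by rewrite !push_nontriv //; apply: swap_equiv_head.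
Qed.

Lemma push_comm v g w h r : adj v w ->
  sweq (push v g (push w h r)) (push w h (push v g r)).
Proof.
move=> adj_vw; case: (classic (h = gone (G w))) => [->|h_nontriv].
  by rewrite !push_one; exact: swap_equiv_refl.
by rewrite !(push_nontriv _ h_nontriv); apply: push_cons_adj.
Qed.

Lemma act_cons_adj v g w m r : adj v w ->
  sweq (act (mksyl v g) (mksyl w m :: r)) (mksyl w m :: act (mksyl v g) r).
Proof.
move=> adj_vw; case: (classic (has_head v r)) => [/has_headE [k [r0 Hr]]|no_head].
  have Hu : sweq (mksyl w m :: r) (mksyl v k :: mksyl w m :: r0).
    apply: swap_equiv_trans (swap_equiv_cons _ Hr) (swap_equiv_head _ _).
    by rewrite /syl_adj /= adj_sym.
  apply: swap_equiv_trans (act_head g Hu) _.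
  apply: swap_equiv_trans (push_cons_adj (x := mksyl w m) _ _ adj_vw) _.
  exact: swap_equiv_cons _ (sweq_sym (act_head g Hr)).
have no_head' : ~ has_head v (mksyl w m :: r) by move/(has_head_cons_adj adj_vw).
by rewrite !act_no_head //; apply: push_cons_adj.
Qed.

Lemma act_push_adj v g w h r : adj v w ->
  sweq (act (mksyl v g) (push w h r)) (push w h (act (mksyl v g) r)).
Proof.
move=> adj_vw; case: (classic (h = gone (G w))) => [->|h_nontriv].
  by rewrite !push_one; exact: swap_equiv_refl.
by rewrite !push_nontriv //; apply: act_cons_adj.
Qed.

Lemma act_comm_head v g w h u : adj v w -> has_head w u ->
  sweq (act (mksyl v g) (act (mksyl w h) u)) (act (mksyl w h) (act (mksyl v g) u)).
Proof.
move=> adj_vw /has_headE [m [r H]].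
apply: swap_equiv_trans (act_sweq _ (act_head h H)) _.
apply: swap_equiv_trans (act_push_adj _ _ _ adj_vw) _.
apply: sweq_sym; apply: act_head.
apply: swap_equiv_trans (act_sweq _ H) _.
exact: act_cons_adj.
Qed.

Lemma act_comm v g w h u : adj v w ->
  sweq (act (mksyl v g) (act (mksyl w h) u)) (act (mksyl w h) (act (mksyl v g) u)).
Proof.
move=> adj_vw; have adj_wv : adj w v by rewrite adj_sym.
case: (classic (has_head w u)) => [Hw|no_head_w]; first exact: act_comm_head.
case: (classic (has_head v u)) => [Hv|no_head_v].
  exact: sweq_sym (act_comm_head _ _ adj_wv Hv).
rewrite (act_no_head _ no_head_w) (act_no_head _ no_head_v).
apply: swap_equiv_trans (act_push_adj _ _ _ adj_vw) _.
apply: swap_equiv_trans _ (sweq_sym (act_push_adj _ _ _ adj_wv)).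
rewrite (act_no_head _ no_head_w) (act_no_head _ no_head_v).
exact: push_comm.
Qed.

Definition normalize (w : seq syl) : seq syl := foldr act [::] w.

Lemma foldr_act_sweq a t t' : sweq t t' -> sweq (foldr act t a) (foldr act t' a).
Proof. by elim: a => [|x a IH] //= H; apply: act_sweq (IH H). Qed.

Lemma swap_reduced_normalize w : swap_reduced (normalize w).
Proof. by elim: w => [|x w IH] /=; [exact: swap_reduced_nil | exact: swap_reduced_act]. Qed.

Lemma normalize_wstep w w' : wstep adj w w' -> sweq (normalize w) (normalize w').
Proof.
rewrite /normalize; case=> [a b [v g] [w0 h] adj_vw|a b v g h|a b v];
  rewrite !foldr_cat; apply: foldr_act_sweq => /=.
- exact: act_comm.
- exact: act_mul (swap_reduced_normalize b).
- exact: act_one (swap_reduced_normalize b).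
Qed.

Lemma normalize_wequiv w w' : wequiv adj w w' -> sweq (normalize w) (normalize w').
Proof.
elim=> [x y /normalize_wstep //|x|x y _ /sweq_sym //|x y z _ H1 _ H2].
  exact: swap_equiv_refl.
exact: swap_equiv_trans H1 H2.
Qed.

Lemma normalize_swap_reduced u : swap_reduced u -> sweq (normalize u) u.
Proof.
elim: u => [|[v g] u IH] red_u /=; first exact: swap_equiv_refl.
have red_tail := swap_reduced_behead red_u (swap_equiv_refl _ _).
apply: swap_equiv_trans (act_sweq _ (IH red_tail)) _; rewrite -/(mksyl v g).
case: red_u => no_one no_pair; rewrite act_no_head.
  rewrite push_nontriv; first exact: swap_equiv_refl.
  by move=> g1; apply: (no_one v); left; rewrite g1.
by case/has_headE=> [k [r H]]; apply: (no_pair [::] r v g k); apply: swap_equiv_cons.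
Qed.

Lemma sweq_wsteps u u' : sweq u u' -> clos_refl_trans _ (wstep adj (G := G)) u u'.
Proof.
elim=> [_ _ [a b x y adj_xy]|x|x y z _ H1 _ H2]; [|exact: rt_refl|exact: rt_trans H1 H2].
exact/rt_step/wswap.
Qed.

Lemma reduced_swap_reduced u : reduced adj u -> swap_reduced u.
Proof.
move=> red_u; split.
  move=> v /(in_split _ _) [p [q E]].
  have := red_u (p ++ q); rewrite E.
  move=> /(_ (rt_step _ _ _ _ (wdelete adj p q v))).
  by rewrite !size_cat /= addnS ltnn.
move=> p q v k k' H.
have := red_u (p ++ mksyl v (gmul k k') :: q).
move=> /(_ (rt_trans _ _ _ _ _ (sweq_wsteps H) (rt_step _ _ _ _ (wmerge adj p q k k')))).
by rewrite (swap_equiv_size H) !size_cat /= addnS ltnn.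
Qed.

Theorem reduced_wequiv_sweq u u' : reduced adj u -> reduced adj u' ->
  wequiv adj u u' -> sweq u u'.
Proof.
move=> red_u red_u' H.
apply: swap_equiv_trans (sweq_sym (normalize_swap_reduced (reduced_swap_reduced red_u))) _.
apply: swap_equiv_trans (normalize_wequiv H) _.
exact: normalize_swap_reduced (reduced_swap_reduced red_u').
Qed.

End NormalForm.

Lemma count_bounded_layers (T : Type) (h : T -> nat) (s : seq T) m d :
  (forall k, count (fun x => h x == k) s <= m) ->
  count (fun x => 0 < h x <= d) s <= d * m.
Proof.
move=> layer; elim: d => [|d IH].
  by rewrite (@eq_count _ _ pred0) ?count_pred0 // => x /=; case: (h x).
have -> : count (fun x => 0 < h x <= d.+1) s =
          count (fun x => 0 < h x <= d) s + count (fun x => h x == d.+1) s.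
  elim: s {layer IH} => //= x s ->; case: (h x) => [|n] /=; first by rewrite !add0n.
  by rewrite ltnS eqSS; case: (ltngtP n d) => /= ?; lia.
by rewrite mulSn addnC leq_add.
Qed.

Section Tail.
Variables (V : finType) (adj : rel V).
Hypotheses (adj_sym : symmetric adj) (adj_irr : irreflexive adj).

Lemma count_height_layer (T : eqType) (vert : T -> V) (L : seq T) k : uniq L ->
  count (fun i => height (relpre vert adj) L i == k) L <= clique_number adj.
Proof.
move=> uL; rewrite -size_filter; set Y := filter _ L.
have adj_Y i j : i \in Y -> j \in Y -> i != j -> adj (vert i) (vert j).
  rewrite !mem_filter => /andP [/eqP hi iL] /andP [/eqP hj jL] nij.
  have comm_sym : symmetric (relpre vert adj) by move=> ? ?; exact: adj_sym.
  exact: (eq_height_comm comm_sym uL iL jL nij (etrans hi (esym hj))).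
have uniq_vY : uniq (map vert Y).
  rewrite map_inj_in_uniq ?filter_uniq // => i j iY jY Ev.
  by apply/eqP/negPn/negP => /(adj_Y i j iY jY); rewrite Ev adj_irr.
rewrite -(size_map vert) -(card_uniqP uniq_vY) -cardsE.
apply: leq_bigmax_cond; apply/forall_inP => x; rewrite inE => /mapP [i iY ->].
apply/forall_inP => y; rewrite inE => /mapP [j jY ->].
by apply/implyP => nv; apply: adj_Y => //; apply: contraNneq nv => ->.
Qed.

Section Positions.
Variables (G : V -> grp) (u0 : seq (syll G)) (x0 : syll G).

(* Syllables of words swap-equivalent to u0 are tracked by their position in u0. *)
Let pos := nth x0 u0.
Let positions := iota 0 (size u0).
Let pos_height := height (relpre (fun i => tag (pos i)) adj) positions.

Lemma tail_position u s d :
  swap_equiv (@syl_adj _ adj G) u0 u -> List.In s (drop (size u - d) u) ->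
  exists2 i, s = pos i & i \in [seq i <- positions | 0 < pos_height i <= d].
Proof.
rewrite -[u0 in swap_equiv _ u0](mkseq_nth x0) => /swap_equiv_map [L' -> H].
rewrite size_map -map_drop => /in_map_iff [i [<- /InP iL']].
exists i => //; have perm_L' := swap_equiv_perm H.
have iL : i \in positions by rewrite (perm_mem perm_L') (mem_drop iL').
rewrite mem_filter iL andbT height_gt0 //=.
have comm_sym : symmetric (relpre (fun i => tag (pos i)) adj) by move=> ? ?; exact: adj_sym.
rewrite /pos_height (height_swap_equiv comm_sym i H) ?iota_uniq //.
by apply: height_drop iL'; rewrite -(perm_uniq perm_L') iota_uniq.
Qed.

Lemma size_tail_leq d (l : seq (syll G)) : List.NoDup l ->
  (forall s, List.In s l -> exists2 u, swap_equiv (@syl_adj _ adj G) u0 u & List.In s (drop (size u - d) u)) ->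
  size l <= d * clique_number adj.
Proof.
move=> nodup_l tail_l; pose good := [seq i <- positions | 0 < pos_height i <= d].
have incl_l : List.incl l (map pos good).
  move=> s /tail_l [u H /(tail_position H) [i -> iP]].
  exact/in_map/InP.
apply: (@leq_trans (size (map pos good))); first exact/leP/(NoDup_incl_length nodup_l incl_l).
rewrite size_map size_filter; apply: count_bounded_layers => k.
exact/count_height_layer/iota_uniq.
Qed.

End Positions.
End Tail.

Theorem mainTheorem7 (V : finType) (adj : rel V)
  (adj_sym : symmetric adj) (adj_irr : irreflexive adj)
  (G : V -> grp) (w : seq (syll G)) (d : nat) (Hd : 1 <= d)
  (l : seq (syll G)) (Hl : List.NoDup l)
  (Htail : forall s, List.In s l -> in_tail adj d w s) :
  size l <= d * clique_number adj.
Proof.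
case: l Hl Htail => [|s0 l] // Hl Htail.
have [u0 [red_u0 [u0_w _]]] := Htail s0 (or_introl erefl).
apply: (size_tail_leq adj_sym adj_irr (u0 := u0) s0) => // s /Htail [u [red_u [u_w s_tail]]].
exists u => //; apply: (reduced_wequiv_sweq adj_sym adj_irr red_u0 red_u).
exact: rst_trans u0_w (rst_sym _ _ _ _ u_w).
Qed.
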